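(* Let $J_{\mathrm{SK}}\subseteq\mathbb{Z}\mathfrak{S}$ be the $\mathbb{Z}$-span of all $u-v$ with $u,v$ permutations of the same size satisfying $u\equiv_{\mathrm{SK}}v$. Then $J_{\mathrm{SK}}$ is a right ideal and a coideal of the Malvenuto–Reutenauer Hopf algebra $(\mathbb{Z}\mathfrak{S},*,\Delta)$. Consequently, $\mathsf{SPR}:=\mathbb{Z}\mathfrak{S}/J_{\mathrm{SK}}$ is a right $\mathsf{PR}$-module and a quotient coalgebra of $\mathsf{PR}$.
   Context: $\mathbb{Z}\mathfrak{S}=\bigoplus_{n\ge0}\mathbb{Z}\mathfrak{S}_n$, permutations viewed as words. For a word $w$ of length $n$ over a totally ordered alphabet, $\mathrm{alph}(w)$ is its set of letters and $\mathrm{st}(w)\in\mathfrak{S}_n$ is the permutation with $\mathrm{st}(w)(i)<\mathrm{st}(w)(j)$ iff $w_i<w_j$, or $w_i=w_j$ and $i<j$. For $I\subseteq[n]$, $w|_I$ is the subword of $w$ consisting of the letters in $I$. The product and coproduct are: for $w\in\mathfrak{S}_p$, $w'\in\mathfrak{S}_q$, $w*w'=\sum uv$ over all words $u,v$ with $\mathrm{alph}(u)\cup\mathrm{alph}(v)=[p+q]$, $\mathrm{st}(u)=w$, $\mathrm{st}(v)=w'$; and for $w\in\mathfrak{S}_n$, $\Delta(w)=\sum_{i=0}^n\mathrm{st}(w|_{[1,i]})\otimes\mathrm{st}(w|_{[i+1,n]})$. Knuth equivalence $\equiv_{\mathrm{K}}$ on $\mathfrak{S}_n$ is generated by (SK1)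 $\dots xzy\dots\sim\dots zxy\dots$ for $x<y<z$ and (SK2) $\dots yxz\dots\sim\dots yzx\dots$ for $x<y<z$ (adjacent letters). Shifted Knuth equivalence $\equiv_{\mathrm{SK}}$ is generated by (SK1), (SK2) and (SK3): $xy\cdots\sim yx\cdots$ when $x,y$ are the first two letters of the permutation. $J_{\mathrm{K}}$ is the $\mathbb{Z}$-span of $u-v$ with $u\equiv_{\mathrm{K}}v$; it is a Hopf ideal, and $\mathsf{PR}=\mathbb{Z}\mathfrak{S}/J_{\mathrm{K}}$ is the Poirier–Reutenauer Hopf algebra. Since $J_{\mathrm{K}}\subseteq J_{\mathrm{SK}}$, $\mathsf{SPR}$ is a quotient of $\mathsf{PR}$. *)

From HB Require Import structures.
From mathcomp Require Import all_boot all_order all_algebra.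
From mathcomp Require Import freeg.
From Stdlib Require Import Relation_Operators.

Set Implicit Arguments.
Unset Strict Implicit.
Unset Printing Implicit Defensive.

Import Order.TTheory GRing.Theory Num.Theory.
Local Open Scope ring_scope.

Definition is_perm (w : seq nat) : bool := perm_eq w (iota 1 (size w)).

(* standardization st(w): st(w)(i) < st(w)(j) iff w_i < w_j, or
   w_i = w_j and i < j.  Value at position i = 1 + #{j | w_j < w_i or
   (w_j = w_i and j < i)}. *)
Definition st (w : seq nat) : seq nat :=
  [seq (count (fun j => (nth 0 w j < nth 0 w i)%N ||
                        ((nth 0 w j == nth 0 w i) && (j < i)%N))
              (iota 0 (size w))).+1 | i <- iota 0 (size w)].

Definition alph_is (s : seq nat) (n : nat) : bool :=
  all (fun i => i \in s) (iota 1 n) && all (fun i => i \in iota 1 n) s.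

Fixpoint words (n k : nat) : seq (seq nat) :=
  if n is n'.+1 then [seq i :: s | i <- iota 1 k, s <- words n' k]
  else [:: [::]].

Definition restr_le (i : nat) (w : seq nat) := [seq a <- w | (a <= i)%N].
Definition restr_gt (i : nat) (w : seq nat) := [seq a <- w | (i < a)%N].

(* The Z-module ZS = Z S : free abelian group on words; its elements  *)
(* that lie in Z S are those supported on permutations.             *)

Definition ZS := {freeg (seq nat) / int}.
Definition ZS2 := {freeg (seq nat * seq nat) / int}.   (* ZS (x) ZS *)

Definition inZS (x : ZS) : Prop := forall w, w \in dom x -> is_perm w.

Definition mul_basis (w w' : seq nat) : ZS :=
  let p := size w in let q := size w' in
  \sum_(u <- words p (p + q))
    \sum_(v <- words q (p + q) | [&& st u == w, st v == w' & alph_is (u ++ v) (p + q)])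
      << u ++ v >>.

Definition mulZS (x y : ZS) : ZS :=
  \sum_(a <- dom x) \sum_(b <- dom y) mul_basis a b *~ (coeff a x * coeff b y).

Definition cop_basis (w : seq nat) : ZS2 :=
  \sum_(i < (size w).+1) << (st (restr_le i w), st (restr_gt i w)) >>.

Definition copZS (x : ZS) : ZS2 := \sum_(a <- dom x) cop_basis a *~ coeff a x.

Definition counitZS (x : ZS) : int := coeff [::] x.

Inductive knuth_step : seq nat -> seq nat -> Prop :=
| SK1 a b x y z : (x < y)%N -> (y < z)%N ->
    knuth_step (a ++ [:: x; z; y] ++ b) (a ++ [:: z; x; y] ++ b)
| SK2 a b x y z : (x < y)%N -> (y < z)%N ->
    knuth_step (a ++ [:: y; x; z] ++ b) (a ++ [:: y; z; x] ++ b).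

Inductive sknuth_step : seq nat -> seq nat -> Prop :=
| SKK u v : knuth_step u v -> sknuth_step u v
| SK3 x y b : sknuth_step [:: x, y & b] [:: y, x & b].

Definition knuth_equiv := clos_refl_sym_trans (seq nat) knuth_step.
Definition sknuth_equiv := clos_refl_sym_trans (seq nat) sknuth_step.

Definition gen_pair (R : seq nat -> seq nat -> Prop) (u v : seq nat) : Prop :=
  [/\ is_perm u, is_perm v, size u = size v & R u v].

Definition in_span (R : seq nat -> seq nat -> Prop) (x : ZS) : Prop :=
  exists s : seq (int * seq nat * seq nat),
    (forall t, t \in s -> gen_pair R t.1.2 t.2) /\
    x = \sum_(t <- s) (<< t.1.2 >> - << t.2 >>) *~ t.1.1.

Definition J_SK := in_span sknuth_equiv.
Definition J_K := in_span knuth_equiv.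

Definition right_ideal (J : ZS -> Prop) : Prop :=
  (forall x y, J x -> J y -> J (x + y)) /\ J 0 /\
  (forall x c, J x -> J (x *~ c)) /\
  (forall x y, J x -> inZS y -> J (mulZS x y)).

Definition in_JtensZS_plus_ZStensJ (R : seq nat -> seq nat -> Prop) (z : ZS2) : Prop :=
  exists (s1 s2 : seq (int * (seq nat * seq nat) * seq nat)),
    (forall t, t \in s1 -> gen_pair R t.1.2.1 t.1.2.2 /\ is_perm t.2) /\
    (forall t, t \in s2 -> gen_pair R t.1.2.1 t.1.2.2 /\ is_perm t.2) /\
    z = \sum_(t <- s1) (<< (t.1.2.1, t.2) >> - << (t.1.2.2, t.2) >>) *~ t.1.1
      + \sum_(t <- s2) (<< (t.2, t.1.2.1) >> - << (t.2, t.1.2.2) >>) *~ t.1.1.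

Definition coideal (R : seq nat -> seq nat -> Prop) : Prop :=
  (forall x, in_span R x -> in_JtensZS_plus_ZStensJ R (copZS x)) /\
  (forall x, in_span R x -> counitZS x = 0).

(* A term of [a * b] is a word [u ++ v] with [st u = a] and [st v = b].  Relabelling [u] by
   [a'] inside its own set of letters is a bijection between the terms of [a * b] and of
   [a' * b]; order-preserving relabelling and appending a suffix preserve shifted Knuth moves,
   so [a * b - a' * b] is a sum of generators of [J_SK].  On the other side only Knuth moves
   survive a prefix, which gives [ZS * J_K <= J_SK].  For the coproduct, keeping only the
   values [<= i] (or [> i]) either erases an SK1/SK2 move (its middle value lies between the
   outer two) or keeps it, keeps the first two letters in front, and commutes with
   standardization; so each term of [Delta u - Delta u'] is [(A, B) - (A', B')] with
   [A ~ A'] and [B ~ B'].  Generators have equal sizes, so the counit kills them. *)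

From mathcomp Require Import all_boot all_order all_algebra.
From mathcomp Require Import freeg zify.
From Stdlib Require Import Relation_Operators.

Set Implicit Arguments.
Unset Strict Implicit.
Unset Printing Implicit Defensive.

Definition rank_in (w : seq nat) (x : nat) : nat := (count (fun y => y < x) w).+1.

Lemma ltn_mono_in_inj (f : nat -> nat) (D : {pred nat}) :
  {in D &, {mono f : x y / x < y}} -> {in D &, injective f}.
Proof.
move=> hm; apply: (mono_inj_in leqnn anti_leq); apply: leq_mono_in.
by move=> x y hx hy; rewrite hm.
Qed.

Lemma count_ltn_mono w x y : x < y -> x \in w ->
  count (fun z => z < x) w < count (fun z => z < y) w.
Proof.
move=> xy; elim: w => //= a w IH; rewrite inE => /orP[/eqP<-|xw].
  by rewrite ltnn xy add0n add1n ltnS; apply: sub_count => z /=; lia.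
by have := IH xw; case: (ltnP a x); case: (ltnP a y); lia.
Qed.

Lemma rank_in_mono w : {in w &, {mono rank_in w : x y / x < y}}.
Proof.
move=> x y xw _; rewrite /rank_in ltnS; case: (ltnP x y) => xy.
  exact: count_ltn_mono.
by apply/negbTE; rewrite -leqNgt; apply: sub_count => z /=; lia.
Qed.

Lemma rank_in_perm_eq w w' : perm_eq w w' -> rank_in w =1 rank_in w'.
Proof. by move/permP=> h x; rewrite /rank_in h. Qed.

Lemma rank_in_bound w x : x \in w -> 0 < rank_in w x <= size w.
Proof.
move=> xw; rewrite /rank_in /= -(count_predC (fun y => y < x) w).
suff : 0 < count (predC (fun y => y < x)) w by lia.
by rewrite -has_count; apply/hasP; exists x => //=; rewrite ltnn.
Qed.

Lemma count_ltn_iota m n x : count (fun z => z < x) (iota m n) = minn (x - m) n.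
Proof.
elim: n m => [|n IH] m /=; first by rewrite minn0.
by rewrite IH; case: ltnP; lia.
Qed.

Lemma size_st w : size (st w) = size w.
Proof. by rewrite /st size_map size_iota. Qed.

Lemma st_uniqE w : uniq w -> st w = map (rank_in w) w.
Proof.
move=> uw; have ew : map (nth 0 w) (iota 0 (size w)) = w.
  by rewrite map_nth_iota0 // take_size.
transitivity (map (rank_in w \o nth 0 w) (iota 0 (size w))); last by rewrite map_comp ew.
apply/eq_in_map => i; rewrite mem_iota add0n => /andP[_ hi] /=.
rewrite /rank_in; congr S.
transitivity (count (fun y => y < nth 0 w i) (map (nth 0 w) (iota 0 (size w)))); last by rewrite ew.
rewrite count_map.
apply: eq_in_count => j; rewrite mem_iota add0n => /andP[_ hj] /=.
case: (nth 0 w j < nth 0 w i) => //=.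
by rewrite nth_uniq //; case: eqP => [->|] //=; rewrite ltnn.
Qed.

Lemma st_map_mono (f : nat -> nat) (D : {pred nat}) w :
  {in D &, {mono f : x y / x < y}} -> {subset w <= D} -> st (map f w) = st w.
Proof.
move=> hm hw; rewrite /st size_map; apply/eq_in_map => i; rewrite mem_iota => /andP[_ hi].
congr S; apply: eq_in_count => j; rewrite mem_iota => /andP[_ hj] /=.
have [wi wj] : nth 0 w i \in D /\ nth 0 w j \in D by split; apply/hw/mem_nth.
by rewrite !(nth_map 0) // hm // (inj_in_eq (ltn_mono_in_inj hm)).
Qed.

Lemma uniq_perm_iota1 s n : uniq s -> size s = n -> {subset s <= iota 1 n} ->
  perm_eq s (iota 1 n).
Proof.
move=> us sn hs; apply: uniq_perm => //; first exact: iota_uniq.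
by apply: (uniq_min_size us hs _).2; rewrite size_iota sn.
Qed.

Lemma is_perm_uniq a : is_perm a -> uniq a.
Proof. by move=> h; rewrite (perm_uniq h) iota_uniq. Qed.

Lemma is_perm_st w : uniq w -> is_perm (st w).
Proof.
move=> uw; rewrite /is_perm size_st st_uniqE //; apply: uniq_perm_iota1.
- by rewrite map_inj_in_uniq //; exact: ltn_mono_in_inj (@rank_in_mono w).
- by rewrite size_map.
- move=> _ /mapP [x xw ->]; rewrite mem_iota; case/andP: (rank_in_bound xw); by move=> -> ; rewrite add1n ltnS.
Qed.

Lemma st_id a : is_perm a -> st a = a.
Proof.
move=> ha; rewrite st_uniqE ?is_perm_uniq //; apply: map_id_in => x xa.
rewrite (rank_in_perm_eq ha) /rank_in count_ltn_iota.
by have := xa; rewrite (perm_mem ha) mem_iota; lia.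
Qed.

Definition unrank (w : seq nat) (i : nat) : nat := nth 0 w (index i (st w)).

(* The word over the letters of [w] whose standardization is [c]. *)
Definition relabel (c w : seq nat) : seq nat := map (unrank w) c.

Section Unrank.
Variable w : seq nat.
Hypothesis uw : uniq w.

Lemma unrank_mem i : i \in st w -> unrank w i \in w.
Proof. by move=> h; rewrite /unrank mem_nth // -(size_st w) index_mem. Qed.

Lemma rank_in_unrank i : i \in st w -> rank_in w (unrank w i) = i.
Proof.
move=> h; rewrite /unrank -(nth_map 0 0); last by rewrite -(size_st w) index_mem.
by rewrite -st_uniqE // nth_index.
Qed.

Lemma rank_in_st y : y \in w -> rank_in w y \in st w.
Proof. by move=> h; rewrite st_uniqE // map_f. Qed.

Lemma unrank_rank_in y : y \in w -> unrank w (rank_in w y) = y.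
Proof.
move=> h; apply: (ltn_mono_in_inj (@rank_in_mono w)) => //.
  exact/unrank_mem/rank_in_st.
by rewrite rank_in_unrank // rank_in_st.
Qed.

Lemma unrank_mono : {in st w &, {mono unrank w : i j / i < j}}.
Proof.
move=> i j hi hj.
by rewrite -{2}(rank_in_unrank hi) -{2}(rank_in_unrank hj) rank_in_mono ?unrank_mem.
Qed.

Lemma relabel_st : relabel (st w) w = w.
Proof.
rewrite /relabel {1}st_uniqE // -map_comp.
by apply: map_id_in => y yw /=; exact: unrank_rank_in.
Qed.

Lemma is_perm_sub_st c : is_perm c -> size c = size w -> {subset c <= st w}.
Proof.
by move=> hc sc i; rewrite (perm_mem hc) (perm_mem (is_perm_st uw)) size_st sc.
Qed.

Lemma perm_relabel c : is_perm c -> size c = size w -> perm_eq (relabel c w) w.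
Proof.
move=> hc sc; rewrite -{2}relabel_st /relabel perm_map //.
by apply: perm_trans hc _; rewrite sc -(size_st w) perm_sym; exact: is_perm_st.
Qed.

Lemma st_relabel c : is_perm c -> size c = size w -> st (relabel c w) = c.
Proof.
by move=> hc sc; rewrite (st_map_mono unrank_mono (is_perm_sub_st hc sc)) st_id.
Qed.

End Unrank.

Lemma unrank_perm_eq w w' : uniq w -> perm_eq w w' -> {in st w, unrank w' =1 unrank w}.
Proof.
move=> uw hp i hi; have uw' : uniq w' by rewrite -(perm_uniq hp).
have hi' : i \in st w'.
  by rewrite st_uniqE // -(eq_map (rank_in_perm_eq hp)) -(perm_mem (perm_map _ hp)) -st_uniqE.
apply: (ltn_mono_in_inj (@rank_in_mono w)).
- by rewrite (perm_mem hp) unrank_mem.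
- exact: unrank_mem.
- by rewrite (rank_in_perm_eq hp) !rank_in_unrank.
Qed.

Lemma relabel_relabel w a c : uniq w ->
  is_perm a -> size a = size w -> is_perm c -> size c = size w ->
  relabel c (relabel a w) = relabel c w.
Proof.
move=> uw ha sa hc sc; apply/eq_in_map => i hi.
by apply: unrank_perm_eq (is_perm_sub_st uw hc sc hi); rewrite // perm_sym perm_relabel.
Qed.

Section ClosureMap.
Variables (T : Type) (R R' : T -> T -> Prop) (I : T -> Prop) (h : T -> T).
Notation crst := (clos_refl_sym_trans T).

Hypothesis R_inv : forall x y, R x y -> I x <-> I y.
Hypothesis R_map : forall x y, R x y -> I x -> crst R' (h x) (h y).

Lemma crst_map_inv x y : crst R x y -> I x -> crst R' (h x) (h y).
Proof.
suff : crst R x y -> (I x <-> I y) /\ (I x -> crst R' (h x) (h y)) by move=> H /H [].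
elim=> {x y} [x y /[dup] /R_inv ? /R_map //| x | x y _ [xy hxy] | x y z _ [xy hxy] _ [yz hyz]].
- by split => // _; apply: rst_refl.
- by split=> [|/xy/hxy]; [rewrite xy | apply: rst_sym].
- split; first by rewrite xy.
  by move=> Ix; apply: rst_trans (hxy Ix) (hyz _); rewrite -xy.
Qed.

End ClosureMap.

Lemma crst_map (T : Type) (R R' : T -> T -> Prop) (h : T -> T) :
  (forall x y, R x y -> clos_refl_sym_trans T R' (h x) (h y)) ->
  forall x y, clos_refl_sym_trans T R x y -> clos_refl_sym_trans T R' (h x) (h y).
Proof.
by move=> hR x y xy; apply: (@crst_map_inv _ _ _ (fun _ => True) _ _ (fun u v r _ => hR u v r)).
Qed.

Lemma knuth_step_perm w1 w2 : knuth_step w1 w2 -> perm_eq w1 w2.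
Proof. by case=> a b x y z _ _; rewrite perm_cat2l perm_cat2r; apply/permP => P /=; lia. Qed.

Lemma sknuth_step_perm w1 w2 : sknuth_step w1 w2 -> perm_eq w1 w2.
Proof. by case=> [u v /knuth_step_perm //|x y b]; apply/permP => P /=; lia. Qed.

Lemma sknuth_equiv_perm w1 w2 : sknuth_equiv w1 w2 -> perm_eq w1 w2.
Proof.
elim=> [x y /sknuth_step_perm //|x|x y _|x y z _ h1 _ h2].
- exact: perm_refl.
- by rewrite perm_sym.
- exact: perm_trans h1 h2.
Qed.

Section MonotoneRelabelling.
Variables (f : nat -> nat) (D : {pred nat}).
Hypothesis f_mono : {in D &, {mono f : x y / x < y}}.

Lemma knuth_step_map w1 w2 : {subset w1 <= D} ->
  knuth_step w1 w2 -> knuth_step (map f w1) (map f w2).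
Proof.
move=> hD h; case: h hD => a b x y z xy yz hD; rewrite !map_cat /=;
  [apply: SK1|apply: SK2]; rewrite f_mono //; apply: hD;
  by rewrite !(mem_cat, inE) eqxx ?orbT.
Qed.

Lemma sknuth_step_map w1 w2 : {subset w1 <= D} ->
  sknuth_step w1 w2 -> sknuth_step (map f w1) (map f w2).
Proof.
by move=> hD h; case: h hD => [u v uv|x y b] hD; [apply/SKK/knuth_step_map|exact: SK3].
Qed.

Let subset_step_inv (R : seq nat -> seq nat -> Prop) :
  (forall u v, R u v -> perm_eq u v) ->
  forall u v, R u v -> {subset u <= D} <-> {subset v <= D}.
Proof.
by move=> Rperm u v /Rperm uv; split=> hu x hx; apply: hu; rewrite ?(perm_mem uv) // -(perm_mem uv).
Qed.

Lemma knuth_equiv_map w1 w2 : {subset w1 <= D} ->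
  knuth_equiv w1 w2 -> knuth_equiv (map f w1) (map f w2).
Proof.
move=> hD h; apply: (crst_map_inv (subset_step_inv knuth_step_perm)) h hD.
by move=> u v uv hu; apply/rst_step/knuth_step_map.
Qed.

Lemma sknuth_equiv_map w1 w2 : {subset w1 <= D} ->
  sknuth_equiv w1 w2 -> sknuth_equiv (map f w1) (map f w2).
Proof.
move=> hD h; apply: (crst_map_inv (subset_step_inv sknuth_step_perm)) h hD.
by move=> u v uv hu; apply/rst_step/sknuth_step_map.
Qed.

End MonotoneRelabelling.

Lemma sknuth_equiv_catr v w1 w2 : sknuth_equiv w1 w2 -> sknuth_equiv (w1 ++ v) (w2 ++ v).
Proof.
apply: (@crst_map _ _ sknuth_step (cat^~ v)) => _ _ [u u' [] a b x y z xy yz|x y b];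
  apply: rst_step; last exact: SK3.
all: by rewrite -!catA; do 2 constructor.
Qed.

(* SK3 does not survive a prefix, hence the Knuth hypothesis. *)
Lemma knuth_equiv_catl v w1 w2 : knuth_equiv w1 w2 -> sknuth_equiv (v ++ w1) (v ++ w2).
Proof.
apply: (@crst_map _ _ sknuth_step (cat v)) => _ _ [] a b x y z xy yz;
  by apply/rst_step/SKK; rewrite !(catA v a); constructor.
Qed.

Lemma knuth_equiv_sknuth w1 w2 : knuth_equiv w1 w2 -> sknuth_equiv w1 w2.
Proof. by apply: (@crst_map _ _ sknuth_step id) => u v uv; apply/rst_step/SKK. Qed.

Definition convex (P : pred nat) := forall a b c, a < b -> b < c -> P a -> P c -> P b.

Lemma sknuth_step_filter (P : pred nat) w1 w2 : convex P -> sknuth_step w1 w2 ->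
  filter P w1 = filter P w2 \/ sknuth_step (filter P w1) (filter P w2).
Proof.
move=> hc [u v [] a b x y z xy yz|x y b]; rewrite ?filter_cat /=.
- case Px: (P x); case Py: (P y); case Pz: (P z) => /=; try by left.
  + by right; do 2 constructor.
  + by have := hc _ _ _ xy yz Px Pz; rewrite Py.
- case Px: (P x); case Py: (P y); case Pz: (P z) => /=; try by left.
  + by right; do 2 constructor.
  + by have := hc _ _ _ xy yz Px Pz; rewrite Py.
- by case: (P x); case: (P y) => /=; [right; exact: SK3|left..].
Qed.

Lemma sknuth_equiv_filter (P : pred nat) w1 w2 : convex P ->
  sknuth_equiv w1 w2 -> sknuth_equiv (filter P w1) (filter P w2).
Proof.
move=> hc; apply: (@crst_map _ _ sknuth_step (filter P)) => u v /(sknuth_step_filter hc) [->|]; first exact: rst_refl.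
exact: rst_step.
Qed.

Lemma sknuth_equiv_st w1 w2 : uniq w1 -> sknuth_equiv w1 w2 -> sknuth_equiv (st w1) (st w2).
Proof.
move=> u1 h; have hp := sknuth_equiv_perm h.
have u2 : uniq w2 by rewrite -(perm_uniq hp).
rewrite (st_uniqE u1) (st_uniqE u2) -(eq_map (rank_in_perm_eq hp)).
exact: sknuth_equiv_map (@rank_in_mono w1) _ _ _ h.
Qed.

Lemma mem_words n k s :
  (s \in words n k) = (size s == n) && all (fun i => i \in iota 1 k) s.
Proof.
elim: n s => [|n IH] [|a s] //=.
- by apply/negbTE/allpairsP => -[[i t] /= [_ _]].
- rewrite eqSS; apply/allpairsP/idP => [[[i t] /= [hi ht [-> ->]]]|].
    by rewrite hi -IH ht.
  by move=> /andP[hs /andP[ha hall]]; exists (a, s); rewrite /= IH hs.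
Qed.

Lemma uniq_words n k : uniq (words n k).
Proof.
elim: n => [|n IH] //=; apply: allpairs_uniq => //; first exact: iota_uniq.
by move=> [i t] [i' t'] _ _ /= [-> ->].
Qed.

Lemma size_words n k s : s \in words n k -> size s = n.
Proof. by rewrite mem_words => /andP[/eqP]. Qed.

Lemma alph_is_uniq s N : alph_is s N -> size s = N -> uniq s.
Proof.
move=> /andP[/allP h1 _] hs; apply: (leq_size_uniq (iota_uniq 1 N)) => //.
by rewrite size_iota hs.
Qed.

Lemma alph_is_perm s N : alph_is s N -> size s = N -> is_perm s.
Proof.
move=> ha hs; rewrite /is_perm hs; apply: uniq_perm_iota1 => //; first exact: alph_is_uniq ha hs.
by case/andP: ha => _ /allP.
Qed.

Lemma alph_is_perm_eq s t N : perm_eq s t -> alph_is s N = alph_is t N.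
Proof.
move=> hp; rewrite /alph_is (perm_all _ hp); congr andb.
by apply: eq_all => i; rewrite (perm_mem hp).
Qed.

Lemma is_perm_perm_eq s t : perm_eq s t -> is_perm s -> is_perm t.
Proof. by move=> hp; rewrite /is_perm -(perm_size hp); apply: perm_trans; rewrite perm_sym. Qed.

Lemma relabel_words p N y c : y \in words p N -> uniq y -> is_perm c -> size c = size y ->
  relabel c y \in words p N.
Proof.
move=> hy uy hc sc; have hp := perm_relabel uy hc sc.
by rewrite mem_words (perm_size hp) (perm_all _ hp) -mem_words.
Qed.

Import GRing.Theory.
Local Open Scope ring_scope.

Lemma coeffMz (K : choiceType) (a : K) (x : {freeg K / int}) (c : int) :
  coeff a (x *~ c) = coeff a x * c.
Proof. by rewrite -mulrzz raddfMz. Qed.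

Section LinearExtension.
Variables (K : choiceType) (V : zmodType).

Definition zlift (F : K -> V) (x : {freeg K / int}) : V := \sum_(a <- dom x) F a *~ coeff a x.

Lemma zlift_dom_sub F x s : uniq s -> {subset dom x <= s} ->
  zlift F x = \sum_(a <- s) F a *~ coeff a x.
Proof.
move=> us hs; rewrite /zlift [RHS](bigID (mem (dom x))) /= [X in _ + X]big1_seq ?addr0; last first.
  by move=> a /andP[/negPf ha _]; rewrite coeff_outdom ?ha // mulr0z.
rewrite -[RHS]big_filter; apply: perm_big; apply: uniq_perm; rewrite ?uniq_dom ?filter_uniq //.
by move=> a; rewrite mem_filter /=; case: (boolP (a \in dom x)) => //= /hs ->.
Qed.

Lemma zliftD F x y : zlift F (x + y) = zlift F x + zlift F y.
Proof.
have us := undup_uniq (dom x ++ dom y).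
rewrite (@zlift_dom_sub F (x + y) _ us); last by move=> a /domD_subset; rewrite mem_undup.
rewrite (@zlift_dom_sub F x _ us); last by move=> a ha; rewrite mem_undup mem_cat ha.
rewrite (@zlift_dom_sub F y _ us); last by move=> a ha; rewrite mem_undup mem_cat ha orbT.
by rewrite -big_split; apply: eq_bigr => a _; rewrite coeffD mulrzDr.
Qed.

Lemma zliftMz F x c : zlift F (x *~ c) = zlift F x *~ c.
Proof.
rewrite (@zlift_dom_sub F _ _ (uniq_dom x)); last first.
  by move=> a; rewrite !mem_dom coeffMz; apply: contra => /eqP->; rewrite mul0r.
by rewrite /zlift mulrz_suml; apply: eq_bigr => a _; rewrite coeffMz mulrzA.
Qed.

Lemma zlift0 F : zlift F 0 = 0.
Proof. by rewrite /zlift dom0 big_nil. Qed.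

Lemma zliftB F x y : zlift F (x - y) = zlift F x - zlift F y.
Proof. by rewrite zliftD -[- y]mulrN1z zliftMz mulrN1z. Qed.

Lemma zliftU F k : zlift F << k >> = F k.
Proof. by rewrite /zlift domU1 big_seq1 coeffU mul1r eqxx mulr1z. Qed.

Lemma zlift_diff_sum F (s : seq (int * K * K)) :
  zlift F (\sum_(t <- s) (<< t.1.2 >> - << t.2 >>) *~ t.1.1) =
  \sum_(t <- s) (F t.1.2 - F t.2) *~ t.1.1.
Proof.
elim: s => [|t s IH]; first by rewrite !big_nil zlift0.
by rewrite !big_cons zliftD IH zliftMz zliftB !zliftU.
Qed.

Lemma zlift_funB F G x : zlift (fun a => F a - G a) x = zlift F x - zlift G x.
Proof. by rewrite /zlift -sumrB; apply: eq_bigr => a _; rewrite mulrzBl. Qed.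

End LinearExtension.

Lemma mulZS_zlift x y : mulZS x y = zlift (fun a => zlift (mul_basis a) y) x.
Proof.
rewrite /mulZS /zlift; apply: eq_bigr => a _; rewrite mulrz_suml.
by apply: eq_bigr => b _; rewrite mulrC mulrzA.
Qed.

Section Span.
Variable R : seq nat -> seq nat -> Prop.

Lemma in_span0 : in_span R 0.
Proof. by exists [::]; rewrite big_nil. Qed.

Lemma in_spanD x y : in_span R x -> in_span R y -> in_span R (x + y).
Proof.
move=> [s1 [h1 ->]] [s2 [h2 ->]]; exists (s1 ++ s2); rewrite big_cat; split=> //.
by move=> t; rewrite mem_cat => /orP[/h1|/h2].
Qed.

Lemma in_spanMz x c : in_span R x -> in_span R (x *~ c).
Proof.
move=> [s [h ->]]; exists [seq (t.1.1 * c, t.1.2, t.2) | t <- s]; split.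
  by move=> _ /mapP [t ht ->]; exact: h ht.
by rewrite big_map mulrz_suml; apply: eq_bigr => t _; rewrite mulrzA.
Qed.

Lemma in_span_sum (I : Type) (r : seq I) (P : pred I) (F : I -> ZS) :
  (forall i, P i -> in_span R (F i)) -> in_span R (\sum_(i <- r | P i) F i).
Proof. exact: (big_ind (in_span R) in_span0 in_spanD). Qed.

Lemma in_span_gen u v : gen_pair R u v -> in_span R (<< u >> - << v >>).
Proof. by exists [:: (1, u, v)]; rewrite big_seq1 mulr1z; split=> // t /[1!inE] /eqP->. Qed.

Lemma in_span_zlift (F : seq nat -> ZS) x : (forall a, in_span R (F a)) -> in_span R (zlift F x).
Proof. by move=> hF; apply: in_span_sum => a _; apply/in_spanMz/hF. Qed.

Local Notation JHJ := (in_JtensZS_plus_ZStensJ R).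

Lemma JHJ0 : JHJ 0.
Proof. by exists [::], [::]; rewrite !big_nil addr0. Qed.

Lemma JHJD x y : JHJ x -> JHJ y -> JHJ (x + y).
Proof.
move=> [s1 [s2 [h1 [h2 ->]]]] [t1 [t2 [g1 [g2 ->]]]].
exists (s1 ++ t1), (s2 ++ t2); rewrite !big_cat addrACA; split; last split=> //.
  by move=> t; rewrite mem_cat => /orP[/h1|/g1].
by move=> t; rewrite mem_cat => /orP[/h2|/g2].
Qed.

Lemma JHJMz x c : JHJ x -> JHJ (x *~ c).
Proof.
move=> [s1 [s2 [h1 [h2 ->]]]].
pose sc (s : seq (int * (seq nat * seq nat) * seq nat)) := [seq (t.1.1 * c, t.1.2, t.2) | t <- s].
exists (sc s1), (sc s2); split; last split.
- by move=> _ /mapP [t ht ->]; exact: h1 ht.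
- by move=> _ /mapP [t ht ->]; exact: h2 ht.
- rewrite !big_map mulrzDl !mulrz_suml.
  by congr (_ + _); apply: eq_bigr => t _; rewrite mulrzA.
Qed.

Lemma JHJ_sum (I : Type) (r : seq I) (P : pred I) (F : I -> ZS2) :
  (forall i, P i -> JHJ (F i)) -> JHJ (\sum_(i <- r | P i) F i).
Proof. exact: (big_ind JHJ JHJ0 JHJD). Qed.

(* [(A, B) - (A', B') = ((A, B) - (A', B)) + ((A', B) - (A', B'))] *)
Lemma JHJ_gen A A' B B' : gen_pair R A A' -> gen_pair R B B' -> is_perm B -> is_perm A' ->
  JHJ (<< (A, B) >> - << (A', B') >>).
Proof.
move=> hA hB pB pA'; exists [:: (1, (A, A'), B)], [:: (1, (B, B'), A')].
rewrite !big_seq1 !mulr1z addrA subrK.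
by split; last split=> //; move=> t /[1!inE] /eqP->.
Qed.

End Span.

Definition std_uniq (a u : seq nat) : bool := (st u == a) && uniq u.

Lemma alph_is_cat_uniq p q u v : u \in words p (p + q) -> v \in words q (p + q) ->
  alph_is (u ++ v) (p + q) -> uniq u && uniq v.
Proof.
move=> hu hv ha; suff : uniq (u ++ v) by rewrite cat_uniq => /and3P[-> _ ->].
by apply: (alph_is_uniq ha); rewrite size_cat (size_words hu) (size_words hv).
Qed.

Lemma alph_is_catl s t v N : perm_eq s t -> alph_is (s ++ v) N = alph_is (t ++ v) N.
Proof. by move=> st; apply: alph_is_perm_eq; rewrite perm_cat2r. Qed.

Lemma alph_is_catr s t u N : perm_eq s t -> alph_is (u ++ s) N = alph_is (u ++ t) N.
Proof. by move=> st; apply: alph_is_perm_eq; rewrite perm_cat2l. Qed.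

Section MulBasis.
Variables a b : seq nat.
Let N := (size a + size b)%N.

Lemma mul_basisE : mul_basis a b =
  \sum_(u <- words (size a) N) \sum_(v <- words (size b) N)
    (if [&& st u == a, st v == b & alph_is (u ++ v) N] then << u ++ v >> else 0).
Proof. by apply: eq_bigr => u _; rewrite big_mkcond. Qed.

Lemma mul_basis_left : mul_basis a b =
  \sum_(u <- words (size a) N | std_uniq a u)
    \sum_(v <- words (size b) N | (st v == b) && alph_is (u ++ v) N) << u ++ v >>.
Proof.
rewrite mul_basisE [RHS]big_mkcond; apply: eq_big_seq => u hu /=.
rewrite /std_uniq; case: (st u == a) => /=; last by rewrite big1.
case: (boolP (uniq u)) => uu /=; first by rewrite [RHS]big_mkcond.
rewrite big1_seq // => v /andP[_ hv]; case ha: (alph_is _ _); last by rewrite andbF.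
by have /andP[] := alph_is_cat_uniq hu hv ha; rewrite (negbTE uu).
Qed.

Lemma mul_basis_right : mul_basis a b =
  \sum_(v <- words (size b) N | std_uniq b v)
    \sum_(u <- words (size a) N | (st u == a) && alph_is (u ++ v) N) << u ++ v >>.
Proof.
rewrite mul_basisE exchange_big [RHS]big_mkcond; apply: eq_big_seq => v hv /=.
rewrite /std_uniq; case: (st v == b) => /=; last by rewrite big1 // => u _; rewrite andbF.
case: (boolP (uniq v)) => uv /=; first by rewrite [RHS]big_mkcond.
rewrite big1_seq // => u /andP[_ hu]; case ha: (alph_is _ _); last by rewrite !andbF.
by have /andP[] := alph_is_cat_uniq hu hv ha; rewrite (negbTE uv).
Qed.

End MulBasis.

Lemma std_uniq_relabel p N a c u : is_perm c -> size c = p -> u \in words p N -> std_uniq a u ->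
  relabel c u \in [seq x <- words p N | std_uniq c x].
Proof.
move=> hc sc hu /andP[_ uu]; have scu : size c = size u by rewrite (size_words hu).
rewrite mem_filter /std_uniq st_relabel // eqxx (perm_uniq (perm_relabel uu hc scu)) uu.
exact: relabel_words.
Qed.

(* Relabelling by [a'] and by [a] are mutually inverse on these words. *)
Lemma sum_std_relabel p N a a' (T : seq nat -> ZS) :
  is_perm a -> is_perm a' -> size a = p -> size a' = p ->
  \sum_(u <- words p N | std_uniq a' u) T u = \sum_(u <- words p N | std_uniq a u) T (relabel a' u).
Proof.
move=> ha ha' sa sa'.
have relabelK c d u : is_perm c -> size c = p -> is_perm d -> size d = p ->
    u \in words p N -> std_uniq d u -> relabel d (relabel c u) = u.
  move=> hc sc hd sd hu /andP[/eqP ed uu]; have su := size_words hu.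
  by rewrite (relabel_relabel uu hc _ hd) ?su // -ed relabel_st.
rewrite -big_filter -[RHS]big_filter -(big_map (relabel a') xpredT T).
apply: perm_big; apply: uniq_perm; rewrite ?filter_uniq ?uniq_words //.
- rewrite map_inj_in_uniq ?filter_uniq ?uniq_words // => x y.
  rewrite !mem_filter => /andP[hx wx] /andP[hy wy] e.
  by rewrite -[x](relabelK _ _ _ ha' sa' ha sa wx hx) e (relabelK _ _ _ ha' sa' ha sa wy hy).
- move=> x; apply/idP/mapP => [|[y]].
  + rewrite mem_filter => /andP[hx wx]; exists (relabel a x).
      exact: std_uniq_relabel ha sa wx hx.
    by rewrite (relabelK _ _ _ ha sa ha' sa' wx hx).
  + by rewrite mem_filter => /andP[hy wy] ->; apply: std_uniq_relabel ha' sa' wy hy.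
Qed.

Lemma J_SK_mul_basisl a a' b : gen_pair sknuth_equiv a a' ->
  J_SK (mul_basis a b - mul_basis a' b).
Proof.
case=> ha ha' s aa'; rewrite !mul_basis_left -s (sum_std_relabel _ _ ha ha' erefl (esym s)).
rewrite -sumrB big_seq_cond; apply: in_span_sum => u /andP[hu /andP[/eqP stu uu]].
have su : size a = size u by rewrite (size_words hu).
have hp : perm_eq (relabel a' u) u by apply: perm_relabel; rewrite -?s.
under [X in _ - X]eq_bigl => v do rewrite (alph_is_catl _ _ hp).
rewrite -sumrB big_seq_cond; apply: in_span_sum => v /andP[hv /andP[_ hal]]; apply: in_span_gen.
have huv : is_perm (u ++ v) by apply: (alph_is_perm hal); rewrite size_cat su (size_words hv).
have hp' : perm_eq (u ++ v) (relabel a' u ++ v) by rewrite perm_cat2r perm_sym.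
split; [done | exact: is_perm_perm_eq huv | exact: perm_size hp' |].
rewrite -[in X in X ++ v](relabel_st uu) stu; apply: sknuth_equiv_catr.
by apply: sknuth_equiv_map (unrank_mono uu) _ _ _ aa'; apply: is_perm_sub_st.
Qed.

Lemma J_SK_mul_basisr a b b' : gen_pair knuth_equiv b b' ->
  J_SK (mul_basis a b - mul_basis a b').
Proof.
case=> hb hb' s bb'; rewrite !mul_basis_right -s (sum_std_relabel _ _ hb hb' erefl (esym s)).
rewrite -sumrB big_seq_cond; apply: in_span_sum => v /andP[hv /andP[/eqP stv uv]].
have sv : size b = size v by rewrite (size_words hv).
have hp : perm_eq (relabel b' v) v by apply: perm_relabel; rewrite -?s.
under [X in _ - X]eq_bigl => u do rewrite (alph_is_catr _ _ hp).
rewrite -sumrB big_seq_cond; apply: in_span_sum => u /andP[hu /andP[_ hal]]; apply: in_span_gen.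
have huv : is_perm (u ++ v) by apply: (alph_is_perm hal); rewrite size_cat sv (size_words hu).
have hp' : perm_eq (u ++ v) (u ++ relabel b' v) by rewrite perm_cat2l perm_sym.
split; [done | exact: is_perm_perm_eq huv | exact: perm_size hp' |].
rewrite -[in X in u ++ X](relabel_st uv) stv; apply: knuth_equiv_catl.
by apply: knuth_equiv_map (unrank_mono uv) _ _ _ bb'; apply: is_perm_sub_st.
Qed.

Lemma convex_leq i : convex (fun a => (a <= i)%N).
Proof. by move=> a b c ab bc _ ci; apply: leq_trans ci; apply: ltnW. Qed.

Lemma convex_gtn i : convex (fun a => (i < a)%N).
Proof. by move=> a b c ab _ ia _; apply: ltn_trans ia ab. Qed.

Lemma gen_pair_st_filter (P : pred nat) u u' : convex P -> gen_pair sknuth_equiv u u' ->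
  gen_pair sknuth_equiv (st (filter P u)) (st (filter P u')).
Proof.
move=> hP [pu pu' _ uu']; have uu := is_perm_uniq pu.
split; rewrite ?is_perm_st ?filter_uniq ?is_perm_uniq ?size_st //.
  exact/perm_size/perm_filter/sknuth_equiv_perm.
by apply: sknuth_equiv_st; [exact: filter_uniq | exact: sknuth_equiv_filter].
Qed.

Lemma JHJ_cop_basis u u' : gen_pair sknuth_equiv u u' ->
  in_JtensZS_plus_ZStensJ sknuth_equiv (cop_basis u - cop_basis u').
Proof.
move=> uu'; have [pu pu' s _] := uu'.
rewrite /cop_basis /restr_le /restr_gt -s -sumrB; apply: JHJ_sum => i _; apply: JHJ_gen.
- by apply: gen_pair_st_filter uu'; apply: convex_leq.
- by apply: gen_pair_st_filter uu'; apply: convex_gtn.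
- exact/is_perm_st/filter_uniq/is_perm_uniq.
- exact/is_perm_st/filter_uniq/is_perm_uniq.
Qed.

Lemma coeff_nil_span (s : seq (int * seq nat * seq nat)) :
  (forall t, t \in s -> size t.1.2 = size t.2) ->
  coeff [::] (\sum_(t <- s) (<< t.1.2 >> - << t.2 >>) *~ t.1.1 : ZS) = 0.
Proof.
move=> hs; rewrite raddf_sum big1_seq // => t /andP[_ /hs e].
by rewrite raddfMz raddfB /= !coeffU -!size_eq0 e subrr mul0rz.
Qed.

Lemma J_SK_right_ideal : right_ideal J_SK.
Proof.
split; [exact: in_spanD | split; [exact: in_span0 | split; [exact: in_spanMz|]]].
move=> _ y [s [hs ->]] _; rewrite mulZS_zlift zlift_diff_sum big_seq_cond.
apply: in_span_sum => t /andP[ht _]; apply: in_spanMz.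
by rewrite -zlift_funB; apply: in_span_zlift => b; apply/J_SK_mul_basisl/hs.
Qed.

Lemma J_SK_coideal : coideal sknuth_equiv.
Proof.
split=> _ [s [hs ->]]; last by apply: coeff_nil_span => t /hs [].
rewrite /copZS -/(zlift cop_basis _) zlift_diff_sum big_seq_cond.
by apply: JHJ_sum => t /andP[ht _]; apply/JHJMz/JHJ_cop_basis/hs.
Qed.

Lemma J_K_sub_J_SK x : J_K x -> J_SK x.
Proof.
move=> [s [hs ->]]; exists s; split=> // t /hs [pu pu' e h].
by split=> //; apply: knuth_equiv_sknuth.
Qed.

Lemma J_SK_mul_J_K x y : J_K y -> J_SK (mulZS x y).
Proof.
move=> [s [hs ->]]; rewrite mulZS_zlift; apply: in_span_zlift => a.
rewrite zlift_diff_sum big_seq_cond; apply: in_span_sum => t /andP[ht _].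
by apply/in_spanMz/J_SK_mul_basisr/hs.
Qed.

Theorem theorem4p1 :
  (* J_SK is a right ideal and a coideal of (ZS, *, Delta) *)
  right_ideal J_SK /\ coideal sknuth_equiv /\
  (* consequences: J_K is contained in J_SK and ZS * J_K lies in J_SK, so
     SPR = ZS/J_SK is a right PR-module; and SPR is a quotient coalgebra of PR *)
  (forall x, J_K x -> J_SK x) /\
  (forall x y, inZS x -> J_K y -> J_SK (mulZS x y)).
Proof.
split; first exact: J_SK_right_ideal.
split; first exact: J_SK_coideal.
split; first exact: J_K_sub_J_SK.
by move=> x y _; apply: J_SK_mul_J_K.
Qed.
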